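(* Let $s\ge1$ and $N\ge1$ be integers, $f_s(z)=z^s$, knots $z_k=-1+\frac{2k}{N}$ ($k=0,\dots,N$), and let $g$ be the continuous piecewise-linear function on $[-1,1]$ interpolating $f_s$ at these knots. Then \[ \sup_{z\in[-1,1]}|f_s(z)-g(z)|\ \le\ \frac{s(s-1)}{2N^2}. \] Moreover, there exist $M\le N+1$ and reals $a_i,b_i,c_i$ ($i=1,\dots,M$) with $|a_i|\le1$, $|b_i|\le1$ and $|c_i|\le\max\{s+\frac12,\ \frac{2s(s-1)}{N}\}$ such that $g(z)=\sum_{i=1}^M c_i\,\mathrm{ReLU}(a_iz-b_i)$ for all $z\in[-1,1]$. In particular, for $\varepsilon>0$, choosing $N\ge\max\{1,\lceil\sqrt{s(s-1)/(2\varepsilon)}\rceil\}$ ensures $\sup_{z\in[-1,1]}|f_s(z)-g(z)|\le\varepsilon$, so $M=O(s/\sqrt\varepsilon)$ ReLU units suffice for accuracy $\varepsilon$.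
   Context: $\mathrm{ReLU}(t)=\max\{0,t\}$. *)

From mathcomp Require Import all_boot all_order all_algebra.
From mathcomp Require Import reals.
Set Implicit Arguments. Unset Strict Implicit. Unset Printing Implicit Defensive.
Import Order.TTheory GRing.Theory Num.Theory.
Local Open Scope ring_scope.

Definition relu {R : realType} (t : R) : R := Num.max 0 t.

Definition knot {R : realType} (N k : nat) : R := -1 + 2 * k%:R / N%:R.

Definition knot_index {R : realType} (N : nat) (z : R) : nat :=
  minn (Num.truncn ((z + 1) * N%:R / 2)) (N - 1).

Definition pl_interp {R : realType} (N : nat) (f : R -> R) (z : R) : R :=
  let k := knot_index N z in
  f (knot N k) + (f (knot N k.+1) - f (knot N k)) / (knot N k.+1 - knot N k)
                 * (z - knot N k).

From mathcomp Require Import all_boot all_order all_algebra.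
From mathcomp Require Import reals ring lra.
Set Implicit Arguments. Unset Strict Implicit. Unset Printing Implicit Defensive.
Import Order.TTheory GRing.Theory Num.Theory.
Local Open Scope ring_scope.

(* Let [u <= z <= v] be consecutive knots, [h = v - u = 2/N], and write
   [dqpow s x y] for the polynomial quotient [(x^s - y^s)/(x - y)]. The chord of
   [x^s] over [[u, v]] has slope [dqpow s v u], so
   [z^s - g z = (z - u) (dqpow s z u - dqpow s v u)], and since [dqpow s . u] is
   [s(s-1)/2]-Lipschitz on [[-1, 1]] the error is at most
   [s(s-1)/2 * |(z - u)(z - v)| <= s(s-1)/2 * h^2/4].
   The interpolant is [f(-1)] plus one hinge [relu (z - z_j)] per knot, weighted
   by the jump of slope at [z_j]; a jump is a difference of [dqpow s . z_(j+1)]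
   at points [2h] apart, hence at most [2s(s-1)/N] by the same Lipschitz bound. *)

Section PowerDifferenceQuotient.
Variable R : numFieldType.
Implicit Types x y u : R.

Fixpoint dqpow n x y : R := if n is m.+1 then x ^+ m + y * dqpow m x y else 0.

Lemma subrX_dqpow n x y : x ^+ n - y ^+ n = (x - y) * dqpow n x y.
Proof.
elim: n => [|n IH] /=; first by rewrite !expr0 subrr mulr0.
by rewrite mulrDr mulrCA -IH !exprS; ring.
Qed.

Lemma dqpowSr n x y : dqpow n.+1 x y = y ^+ n + x * dqpow n x y.
Proof.
elim: n => [|n IH]; first by rewrite /= !expr0 !mulr0.
have -> : dqpow n.+2 x y = x ^+ n.+1 + y * dqpow n.+1 x y by [].
by rewrite [in LHS]IH /= !exprS; ring.
Qed.

Lemma dqpowC n x y : dqpow n x y = dqpow n y x.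
Proof. by elim: n => [|n IH] //; rewrite dqpowSr IH. Qed.

Lemma norm_dqpow_le n x y : `|x| <= 1 -> `|y| <= 1 -> `|dqpow n x y| <= n%:R.
Proof.
move=> x1 y1; elim: n => [|n IH] /=; first by rewrite normr0.
apply: le_trans (ler_normD _ _) _.
rewrite -natr1 addrC lerD ?normrX ?exprn_ile1 //.
by rewrite normrM -[leRHS]mul1r ler_pM.
Qed.

Lemma lipschitz_dqpow n x y u : `|x| <= 1 -> `|y| <= 1 -> `|u| <= 1 ->
  `|dqpow n x u - dqpow n y u| <= n%:R * (n%:R - 1) / 2 * `|x - y|.
Proof.
move=> x1 y1 u1; elim: n => [|n IH] /=; first by rewrite subrr normr0 !mul0r.
have -> : x ^+ n + u * dqpow n x u - (y ^+ n + u * dqpow n y u)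
    = (x - y) * dqpow n x y + u * (dqpow n x u - dqpow n y u).
  by rewrite -subrX_dqpow; ring.
apply: le_trans (ler_normD _ _) _.
have -> : n.+1%:R * (n.+1%:R - 1) / 2 * `|x - y|
    = `|x - y| * n%:R + n%:R * (n%:R - 1) / 2 * `|x - y| :> R.
  by rewrite -natr1; field.
rewrite !normrM lerD ?ler_wpM2l ?norm_dqpow_le //.
by rewrite -[leRHS]mul1r ler_pM.
Qed.

End PowerDifferenceQuotient.

Section ChordOfPower.
Variable R : realFieldType.

Lemma natrM_subr1_ge0 (s : nat) : 0 <= s%:R * (s%:R - 1) :> R.
Proof. by case: s => [|s]; rewrite ?mul0r // mulr_ge0 // subr_ge0 ler1n. Qed.

Lemma normr_subMsub_le (u v z : R) :
  u <= z <= v -> `|(z - u) * (z - v)| <= (v - u) ^+ 2 / 4.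
Proof.
move=> /andP[uz zv]; rewrite ler_norml.
have := sqr_ge0 (2 * z - u - v); have := sqr_ge0 (v - u).
have : 0 <= (z - u) * (v - z) by rewrite mulr_ge0 ?subr_ge0.
by move=> *; apply/andP; split; nra.
Qed.

Lemma pow_chord_error s (u v z : R) : `|u| <= 1 -> `|v| <= 1 -> u <= z <= v ->
  `|z ^+ s - (u ^+ s + dqpow s v u * (z - u))|
    <= s%:R * (s%:R - 1) / 2 * ((v - u) ^+ 2 / 4).
Proof.
move=> u1 v1 uzv.
have z1 : `|z| <= 1.
  by move: u1 v1 uzv; rewrite !ler_norml => /andP[? ?] /andP[? ?] /andP[? ?]; lra.
have -> : z ^+ s - (u ^+ s + dqpow s v u * (z - u))
    = (z - u) * (dqpow s z u - dqpow s v u).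
  by rewrite [RHS]mulrBr -subrX_dqpow; ring.
rewrite normrM.
apply: le_trans (ler_wpM2l (normr_ge0 _) (lipschitz_dqpow s z1 v1 u1)) _.
by rewrite mulrCA -normrM ler_wpM2l ?divr_ge0 ?natrM_subr1_ge0 ?normr_subMsub_le.
Qed.

End ChordOfPower.

Section Knots.
Variables (R : realType) (N : nat).
Hypothesis N_gt0 : (0 < N)%N.

Lemma knotE k : knot N k = -1 + k%:R * (2 / N%:R) :> R.
Proof. by rewrite /knot mulrA [2 * _]mulrC. Qed.

Lemma knotS k : knot N k.+1 - knot N k = 2 / N%:R :> R.
Proof. by rewrite !knotE -natr1; ring. Qed.

Lemma knot_step_gt0 : 0 < 2 / N%:R :> R.
Proof. by rewrite divr_gt0 ?ltr0n. Qed.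

Lemma knot0 : knot N 0 = -1 :> R.
Proof. by rewrite knotE mul0r addr0. Qed.

Lemma knotN : knot N N = 1 :> R.
Proof. by rewrite /knot mulfK ?pnatr_eq0 -?lt0n //; lra. Qed.

Lemma le_knot j k : (j <= k)%N -> knot N j <= knot N k :> R.
Proof. by move=> jk; rewrite !knotE lerD2l ler_wpM2r ?ler_nat ?divr_ge0. Qed.

Lemma norm_knot_le k : (k <= N)%N -> `|knot N k| <= 1 :> R.
Proof.
move=> kN; rewrite ler_norml -[-1]knot0 le_knot //=.
by rewrite -knotN le_knot.
Qed.

Lemma knot_le_coordE k (z : R) : (knot N k <= z) = (k%:R <= (z + 1) * N%:R / 2).
Proof.
rewrite knotE -lerBrDl opprK -ler_pdivlMr ?knot_step_gt0 //.
by rewrite invf_div mulrA.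
Qed.

Lemma le_knot_coordE k (z : R) : (z <= knot N k) = ((z + 1) * N%:R / 2 <= k%:R).
Proof.
rewrite knotE -lerBlDl opprK -ler_pdivrMr ?knot_step_gt0 //.
by rewrite invf_div mulrA.
Qed.

Lemma knot_indexP (z : R) : -1 <= z <= 1 ->
  (knot_index N z < N)%N /\
  knot N (knot_index N z) <= z <= knot N (knot_index N z).+1.
Proof.
move=> /andP[z_ge z_le]; rewrite /knot_index subn1 !knot_le_coordE !le_knot_coordE.
set t := (z + 1) * N%:R / 2.
have t_ge0 : 0 <= t by rewrite /t !mulr_ge0 //; lra.
have t_leN : t <= N%:R by rewrite -le_knot_coordE knotN.
have /andP[trunc_le lt_trunc] := truncn_itv t_ge0.
have N_pred : N.-1.+1 = N by rewrite prednK.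
case: (leqP (Num.truncn t) N.-1) => [le_trunc | lt_trunc'].
  by rewrite trunc_le ltW // -N_pred ltnS.
rewrite N_pred t_leN andbT; split=> //.
by apply: le_trans _ trunc_le; rewrite ler_nat ltnW.
Qed.

End Knots.

Section ReLU.
Variable R : realType.
Implicit Type t : R.

Lemma ger0_relu t : 0 <= t -> relu t = t.
Proof. exact: max_r. Qed.

Lemma ler0_relu t : t <= 0 -> relu t = 0.
Proof. exact: max_l. Qed.

End ReLU.

Section HingeExpansion.
Variables (R : realType) (N : nat).
Hypothesis N_gt0 : (0 < N)%N.
Implicit Type f : R -> R.

Definition knot_slope f k : R :=
  (f (knot N k.+1) - f (knot N k)) / (knot N k.+1 - knot N k).

Definition hinge_coef f j : R :=
  if j is i.+1 then knot_slope f i.+1 - knot_slope f i else knot_slope f 0.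

Lemma pl_interpE f z : pl_interp N f z =
  f (knot N (knot_index N z))
  + knot_slope f (knot_index N z) * (z - knot N (knot_index N z)).
Proof. by []. Qed.

Lemma knot_slopeK f k :
  f (knot N k.+1) = f (knot N k) + knot_slope f k * (knot N k.+1 - knot N k).
Proof. by rewrite /knot_slope divfK ?knotS ?gt_eqF ?knot_step_gt0 //; ring. Qed.

Lemma hinge_coef_telescope f z k :
  f (knot N 0) + \sum_(0 <= j < k.+1) hinge_coef f j * (z - knot N j)
  = f (knot N k) + knot_slope f k * (z - knot N k).
Proof.
elim: k => [|k IH]; first by rewrite big_nat1.
by rewrite big_nat_recr //= addrA IH (knot_slopeK f k); ring.
Qed.

Lemma pl_interp_hinge f z : -1 <= z <= 1 ->
  pl_interp N f z = f (-1) + \sum_(j < N) hinge_coef f j * relu (z - knot N j).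
Proof.
move=> /(knot_indexP N_gt0) [lt_kN /andP[knot_le_z z_le_knot]].
set k := knot_index N z in lt_kN knot_le_z z_le_knot *.
rewrite pl_interpE -hinge_coef_telescope knot0.
rewrite -(big_mkord xpredT (fun j => hinge_coef f j * relu (z - knot N j))).
rewrite (big_cat_nat _ (n := k.+1) (p := N)) //= [X in _ + (_ + X)]big_nat_cond.
rewrite [X in _ + (_ + X)]big1 ?addr0 => [|j /andP[/andP[lt_kj _] _]]; last first.
  by rewrite ler0_relu ?mulr0 // subr_le0 (le_trans z_le_knot) ?le_knot.
congr (_ + _); apply: eq_big_nat => j /andP[_ le_jk].
by rewrite ger0_relu // subr_ge0 (le_trans _ knot_le_z) ?le_knot.
Qed.

(* Unit [0] is the constant [relu (0 * z + 1) = 1] carrying [f (-1)]; unit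
   [j.+1] is the hinge at knot [j]. *)
Definition relu_weight (i : nat) : R := if i is 0 then 0 else 1.
Definition relu_bias (i : nat) : R := if i is j.+1 then knot N j else -1.
Definition relu_coef f (i : nat) : R := if i is j.+1 then hinge_coef f j else f (-1).

Lemma pl_interp_relu_net f z : -1 <= z <= 1 ->
  pl_interp N f z =
  \sum_(i < N.+1) relu_coef f i * relu (relu_weight i * z - relu_bias i).
Proof.
move=> z_in; rewrite pl_interp_hinge // big_ord_recl /= mul0r sub0r opprK.
rewrite ger0_relu ?ler01 // mulr1; congr (_ + _).
by apply: eq_bigr => i _; rewrite /= mul1r.
Qed.

End HingeExpansion.

Section PowerInterpolant.
Variables (R : realType) (s N : nat).
Hypothesis N_gt0 : (0 < N)%N.

Let N_neq0 : N%:R != 0 :> R.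
Proof. by rewrite pnatr_eq0 -lt0n. Qed.

Lemma knot_slope_pow k :
  knot_slope N (fun x : R => x ^+ s) k = dqpow s (knot N k.+1) (knot N k).
Proof.
rewrite /knot_slope subrX_dqpow mulrAC divff ?mul1r //.
by rewrite knotS gt_eqF ?knot_step_gt0.
Qed.

Lemma pl_interp_pow_error z : -1 <= z <= 1 ->
  `|z ^+ s - pl_interp N (fun x : R => x ^+ s) z|
    <= s%:R * (s%:R - 1) / (2 * N%:R ^+ 2).
Proof.
move=> /(knot_indexP N_gt0) [lt_kN z_in_cell].
rewrite pl_interpE knot_slope_pow.
have := pow_chord_error s (norm_knot_le R N_gt0 (ltnW lt_kN))
  (norm_knot_le R N_gt0 lt_kN) z_in_cell.
by rewrite knotS; congr (_ <= _); field.
Qed.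

Lemma norm_hinge_coef_pow_le j : (j < N)%N ->
  `|hinge_coef N (fun x : R => x ^+ s) j|
    <= Num.max (s%:R + 1 / 2) (2 * s%:R * (s%:R - 1) / N%:R).
Proof.
rewrite le_max; case: j => [|j] lt_jN /=; rewrite !knot_slope_pow.
  have := norm_dqpow_le s (norm_knot_le R N_gt0 lt_jN) (norm_knot_le R N_gt0 (leq0n N)).
  by move=> le_s; apply/orP; left; lra.
apply/orP; right; rewrite [dqpow s (knot N j.+1) _]dqpowC.
apply: le_trans (lipschitz_dqpow _ (norm_knot_le R N_gt0 lt_jN)
  (norm_knot_le R N_gt0 (ltnW (ltnW lt_jN))) (norm_knot_le R N_gt0 (ltnW lt_jN))) _.
have -> : knot N j.+2 - knot N j = 2 * (2 / N%:R) :> R.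
  by rewrite -(subrKA (knot N j.+1)) !knotS; ring.
rewrite ger0_norm; last by rewrite mulr_ge0 // ltW // knot_step_gt0.
by rewrite [leLHS](_ : _ = 2 * s%:R * (s%:R - 1) / N%:R) //; field.
Qed.

End PowerInterpolant.

Lemma div_sqr_le_of_ceil_sqrt_le (R : realType) (c eps : R) (n : nat) :
  0 <= c -> 0 < eps ->
  (Num.ceil (Num.sqrt (c / (2 * eps))) <= n%:~R :> int) ->
  c / (2 * n%:R ^+ 2) <= eps.
Proof.
move=> c_ge0 eps_gt0; rewrite ceil_le_int intz => sqrt_le_n.
case: n => [|n] in sqrt_le_n *; first by rewrite expr0n mulr0 invr0 mulr0 ltW.
have : c / (2 * eps) <= n.+1%:R ^+ 2.
  have q_ge0 : 0 <= c / (2 * eps) by rewrite divr_ge0 // mulr_ge0 // ltW.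
  by rewrite -(sqr_sqrtr q_ge0) lerXn2r ?nnegrE ?sqrtr_ge0.
by rewrite ler_pdivrMr ?ler_pdivrMr ?mulr_gt0 ?exprn_gt0 // => le_c; lra.
Qed.

Theorem mainTheorem17 (R : realType) (s N : nat) (hs : (1 <= s)%N) (hN : (1 <= N)%N) :
  let g := pl_interp N (fun x : R => x ^+ s) in
  (forall z : R, -1 <= z <= 1 ->
     `| z ^+ s - g z | <= s%:R * (s%:R - 1) / (2 * N%:R ^+ 2))
  /\
  (exists (M : nat) (a b c : 'I_M -> R),
     [/\ (M <= N.+1)%N,
         forall i, `| a i | <= 1,
         forall i, `| b i | <= 1,
         forall i, `| c i | <= Num.max (s%:R + 1 / 2) (2 * s%:R * (s%:R - 1) / N%:R)
       & forall z : R, -1 <= z <= 1 ->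
           g z = \sum_(i < M) c i * relu (a i * z - b i)])
  /\
  (forall eps : R, 0 < eps ->
     (Num.ceil (Num.sqrt (s%:R * (s%:R - 1) / (2 * eps))) <= N%:~R :> int) ->
     forall z : R, -1 <= z <= 1 -> `| z ^+ s - g z | <= eps).
Proof.
move=> g; have err := @pl_interp_pow_error R s N hN.
split=> //; split.
  exists N.+1, (fun i => relu_weight R i), (fun i => relu_bias R N i),
    (fun i => relu_coef N (fun x : R => x ^+ s) i); split=> //.
  - by case=> -[|i] ?; rewrite /= ?normr0 ?normr1.
  - case=> -[|i] /= lt_iN; first by rewrite normrN normr1.
    exact (norm_knot_le R hN (ltnW (ltnSE lt_iN))).
  - case=> -[|i] /= lt_iN; last exact: norm_hinge_coef_pow_le.
    have s_ge1 : 1 <= s%:R :> R by rewrite ler1n.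
    by rewrite normrX normrN normr1 expr1n le_max; apply/orP; left; lra.
  - by move=> z z_in; rewrite /g pl_interp_relu_net.
move=> eps eps_gt0 ceil_le z z_in; apply: le_trans (err z z_in) _.
exact (div_sqr_le_of_ceil_sqrt_le (natrM_subr1_ge0 R s) eps_gt0 ceil_le).
Qed.
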